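(* If there exists a polyiamond with $n$ tiles and $h$ holes, then $$h\le \frac{3n-2b_{min}(n)-p_{min}(n+h)}{3}.$$
   Context: A polyiamond is a planar shape formed by gluing together finitely many congruent (closed) equilateral triangles (tiles) of the regular triangular lattice along their edges: any two tiles that intersect meet in an entire edge, and the union has connected interior. The number of holes of a polyiamond $A$ is the number of bounded connected components of $\mathbb{R}^2\setminus A$. The perimeter $p(A)$ is the number of lattice edges on the topological boundary of $A$, and $p_{min}(m)$ is the minimum perimeter over all polyiamonds with $m$ tiles. $b(A)$ is the number of lattice edges shared by two tiles of $A$, and $b_{min}(n)$ is the minimum of $b(A)$ over all polyiamonds $A$ with $n$ tiles. *)

From mathcomp Require Import all_boot all_order all_algebra.
From mathcomp Require Import finmap.

Set Implicit Arguments.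
Unset Strict Implicit.
Unset Printing Implicit Defensive.

Local Open Scope fset_scope.

(* Tiles of the regular triangular lattice.  Use lattice coordinates with
   basis vectors e1 = (1,0), e2 = (1/2, sqrt 3/2).  The tile ((x,y),true)
   is the "up" triangle with vertices (x,y),(x+1,y),(x,y+1); the tile
   ((x,y),false) is the "down" triangle with vertices (x+1,y),(x,y+1),(x+1,y+1).
   Every tile of the lattice is of exactly one of these forms. *)
Definition tile : Type := (int * int * bool)%type.

(* The three tiles sharing an entire edge with a given tile. *)
Definition nbrs (t : tile) : seq tile :=
  let: (x, y, up) := t in
  if up then [:: (x, y, false); (x - 1, y, false); (x, y - 1, false)]%R
  else [:: (x, y, true); (x + 1, y, true); (x, y + 1, true)]%R.

Definition adj (t s : tile) : bool := s \in nbrs t.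

Definition edge_connected (S : {fset tile}) : Prop :=
  forall t s, t \in S -> s \in S ->
    exists p : seq tile, [/\ path adj t p, last t p = s & all (fun u => u \in S) p].

(* A polyiamond: a nonempty finite set of lattice tiles whose union has
   connected interior, i.e. the tiles are edge-connected. *)
Definition polyiamond (A : {fset tile}) : Prop :=
  A != fset0 /\ edge_connected A.

(* A hole of A: a bounded connected component of the plane minus A.  These
   correspond exactly to the finite edge-connected components of the set of
   tiles not in A: a nonempty, edge-connected, finite set of non-A tiles
   that is closed under edge-adjacency within the complement of A. *)
Definition is_hole (A H : {fset tile}) : Prop :=
  [/\ H != fset0,
      forall t, t \in H -> t \notin A,
      edge_connected H &
      forall t s, t \in H -> adj t s -> s \notin A -> s \in H].

Definition has_holes (A : {fset tile}) (h : nat) : Prop :=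
  exists Hs : {fset {fset tile}},
    (forall H, H \in Hs <-> is_hole A H) /\ #|` Hs| = h.

(* perimeter: number of lattice edges on the boundary of A, i.e. edges with
   a tile of A on exactly one side; each is counted once as a pair
   (tile of A, adjacent tile not in A). *)
Definition perimeter (A : {fset tile}) : nat :=
  \sum_(t <- A) count (fun s => s \notin A) (nbrs t).

(* b(A): number of lattice edges shared by two tiles of A; every lattice
   edge borders exactly one up tile, so count from the up tiles. *)
Definition bonds (A : {fset tile}) : nat :=
  \sum_(t <- A | t.2) count (fun s => s \in A) (nbrs t).

Definition is_pmin (m p : nat) : Prop :=
  (exists A, [/\ polyiamond A, #|` A| = m & perimeter A = p]) /\
  (forall A, polyiamond A -> #|` A| = m -> p <= perimeter A).

Definition is_bmin (n b : nat) : Prop :=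
  (exists A, [/\ polyiamond A, #|` A| = n & bonds A = b]) /\
  (forall A, polyiamond A -> #|` A| = n -> b <= bonds A).

(* Each hole of A is an edge-connected set of tiles all of whose boundary edges
   border A, so it has perimeter at least 3 and filling it lowers the perimeter by
   that amount: filling the h holes gives a polyiamond F with at least n + h tiles
   and p(F) <= p(A) - 3h.  Tiles are then peeled off F, keeping it connected, down to
   n + h tiles at the cost of at most one unit of perimeter.  Indeed a connected
   polyiamond with two or more tiles has a tile with one neighbour (removing it
   lowers the perimeter by one) or two adjacent tiles with two neighbours each
   whose successive removal keeps the perimeter: without a cut tile such pairs sit
   on the top and on the bottom row, and a cut tile c reduces the question to a
   smaller block hanging off at c.  As p = 3 #tiles - 2b, the perimeter has the
   parity of the area, which absorbs the extra unit, so
   p_min(n + h) <= p(A) - 3h = 3n - 2b(A) - 3h <= 3n - 2b_min(n) - 3h. *)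

From mathcomp Require Import all_boot all_order all_algebra.
From mathcomp Require Import finmap zify boolp.

Set Implicit Arguments.
Unset Strict Implicit.
Unset Printing Implicit Defensive.

Import Order.TTheory GRing.Theory Num.Theory.

Local Open Scope fset_scope.
Local Open Scope nat_scope.

Lemma nbrs_sym t s : (s \in nbrs t) = (t \in nbrs s).
Proof.
wlog suff: t s / s \in nbrs t -> t \in nbrs s by move=> H; apply/idP/idP; apply: H.
by case: t => [[x y] []]; rewrite /= !inE => /or3P[]/eqP-> /=;
  rewrite !inE !xpair_eqE; lia.
Qed.

Lemma adj_sym t s : adj t s -> adj s t.
Proof. by rewrite /adj nbrs_sym. Qed.

Lemma nbrs_irr t : t \notin nbrs t.
Proof. by case: t => [[x y] []]; rewrite /= !inE !xpair_eqE; lia. Qed.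

Lemma nbrs_uniq t : uniq (nbrs t).
Proof. by case: t => [[x y] []]; rewrite /= !inE !xpair_eqE; lia. Qed.

Lemma size_nbrs t : size (nbrs t) = 3.
Proof. by case: t => [[x y] []]. Qed.

Lemma nbrs_orientation t s : s \in nbrs t -> s.2 = ~~ t.2.
Proof. by case: t => [[x y] []]; rewrite /= !inE => /or3P[]/eqP->. Qed.

Definition deg (S : {fset tile}) (t : tile) : nat := count (fun s => s \in S) (nbrs t).

Definition degsum (S : {fset tile}) : nat := \sum_(t <- S) deg S t.

Lemma deg_le_card S t : deg S t <= #|` S|.
Proof.
rewrite /deg -size_filter; apply: uniq_leq_size; first exact/filter_uniq/nbrs_uniq.
by move=> s; rewrite mem_filter => /andP[].
Qed.

Lemma deg_ge2 S t s1 s2 : s1 \in nbrs t -> s2 \in nbrs t -> s1 \in S -> s2 \in S ->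
  s1 != s2 -> 1 < deg S t.
Proof.
move=> n1 n2 S1 S2 s12; rewrite /deg -size_filter.
apply: (@uniq_leq_size _ [:: s1; s2]); first by rewrite /= inE s12.
by move=> s; rewrite !inE mem_filter => /orP[]/eqP->; apply/andP.
Qed.

Lemma deg1_nbr_uniq S t s1 s2 : deg S t = 1 -> s1 \in nbrs t -> s2 \in nbrs t ->
  s1 \in S -> s2 \in S -> s1 = s2.
Proof.
move=> d1 n1 n2 S1 S2; apply/eqP; apply: contraTT isT => s12.
by have := deg_ge2 n1 n2 S1 S2 s12; rewrite d1.
Qed.

Lemma deg_fsetD1 S t s : t \in S -> deg S s = deg (S `\ t) s + (t \in nbrs s).
Proof.
move=> tS; rewrite /deg -(count_uniq_mem t (nbrs_uniq s)) -count_predUI.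
rewrite (@eq_count _ (predI _ _) pred0) ?count_pred0 ?addn0; last first.
  by move=> s' /=; rewrite in_fsetD1 andbC; case: eqP.
by apply: eq_count => s' /=; rewrite in_fsetD1; case: eqP => [->|]; rewrite ?tS ?orbF.
Qed.

Lemma deg_fsetD1_self S t : deg (S `\ t) t = deg S t.
Proof.
apply: eq_in_count => s st /=; rewrite in_fsetD1; case: eqP => // ts.
by move: st (nbrs_irr t); rewrite ts => ->.
Qed.

Lemma deg_fsetU S H t : [disjoint S & H] -> deg (S `|` H) t = deg S t + deg H t.
Proof.
move/fdisjointP=> SH; rewrite /deg -count_predUI.
rewrite (@eq_count _ (predI _ _) pred0) ?count_pred0 ?addn0; last first.
  by move=> s /=; case: (boolP (s \in S)) => // /SH/negbTE ->.
by apply: eq_count => s; rewrite /= in_fsetU.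
Qed.

Lemma count_mem_sym (T : eqType) (s1 s2 : seq T) : uniq s1 -> uniq s2 ->
  count (fun x => x \in s2) s1 = count (fun x => x \in s1) s2.
Proof.
move=> u1 u2; rewrite -!size_filter; apply/perm_size/uniq_perm; rewrite ?filter_uniq //.
by move=> x; rewrite !mem_filter andbC.
Qed.

Lemma sum_count_nbrs_sym (s1 s2 : seq tile) : uniq s1 -> uniq s2 ->
  \sum_(t <- s1) count (fun x => x \in s2) (nbrs t) =
  \sum_(t <- s2) count (fun x => x \in s1) (nbrs t).
Proof.
have count_nbrsE s t : uniq s ->
    count (fun x => x \in s) (nbrs t) = \sum_(y <- s) (t \in nbrs y).
  move=> us; rewrite count_mem_sym ?nbrs_uniq // -sum1_count big_mkcond /=.
  by apply: eq_bigr => y _; rewrite nbrs_sym; case: (t \in nbrs y).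
move=> u1 u2; rewrite (eq_bigr _ (fun t _ => count_nbrsE _ t u2)).
rewrite (eq_bigr _ (fun t _ => count_nbrsE _ t u1)) exchange_big /=.
by apply: eq_bigr => t _; apply: eq_bigr => y _; rewrite nbrs_sym.
Qed.

Lemma perimeter_degsum S : perimeter S + degsum S = 3 * #|` S|.
Proof.
rewrite /perimeter /degsum -big_split /= (eq_bigr (fun=> 3)); last first.
  by move=> t _; rewrite addnC count_predC size_nbrs.
by rewrite big_const_seq count_predT iter_addn_0 mulnC.
Qed.

Lemma degsum_bonds S : degsum S = 2 * bonds S.
Proof.
have side o : \sum_(t <- S | t.2 == o) deg S t =
    \sum_(t <- [seq u <- S | u.2 == o])
      count (fun x => x \in [seq u <- S | u.2 == ~~ o]) (nbrs t).
  rewrite -big_filter; apply: eq_big_seq => t; rewrite mem_filter => /andP[/eqP to _].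
  by apply: eq_in_count => x xt; rewrite /= mem_filter (nbrs_orientation xt) to eqxx.
have -> : bonds S = \sum_(t <- S | t.2 == true) deg S t.
  by apply: eq_bigl => t; rewrite eqb_id.
rewrite /degsum (bigID (fun t : tile => t.2 == true)) /=.
rewrite [X in _ + X](eq_bigl (fun t : tile => t.2 == false)) => [|t]; last first.
  by rewrite eqb_id eqbF_neg.
rewrite mul2n -addnn !side /=.
by rewrite (@sum_count_nbrs_sym [seq u <- S | u.2 == false]) ?filter_uniq ?fset_uniq.
Qed.

Lemma perimeter_bonds S : perimeter S + 2 * bonds S = 3 * #|` S|.
Proof. by rewrite -degsum_bonds perimeter_degsum. Qed.

Lemma card_fsetU_disjoint (K : choiceType) (S H : {fset K}) : [disjoint S & H] ->
  #|` S `|` H| = #|` S| + #|` H|.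
Proof. by move=> SH; rewrite -cardfsUI disjoint_fsetI0 // cardfs0 addn0. Qed.

Lemma degsum_fsetU S H : [disjoint S & H] ->
  degsum (S `|` H) = degsum S + degsum H + 2 * \sum_(t <- H) deg S t.
Proof.
move=> SH; have SHcat : perm_eq (S `|` H) (enum_fset S ++ enum_fset H).
  apply: uniq_perm; rewrite ?fset_uniq ?cat_uniq ?fset_uniq ?andbT //=.
    exact/hasPn/fdisjointP_sym.
  by move=> t; rewrite mem_cat in_fsetU.
rewrite /degsum (perm_big _ SHcat) big_cat /=.
under eq_bigr do rewrite deg_fsetU //.
under [X in _ + X]eq_bigr do rewrite deg_fsetU //.
rewrite !big_split /=.
have -> : \sum_(t <- S) deg H t = \sum_(t <- H) deg S t.
  exact: sum_count_nbrs_sym (fset_uniq S) (fset_uniq H).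
rewrite /=; lia.
Qed.

Lemma perimeter_fsetU S H : [disjoint S & H] ->
  perimeter (S `|` H) + 2 * \sum_(t <- H) deg S t = perimeter S + perimeter H.
Proof.
move=> SH; have := perimeter_degsum (S `|` H); have := perimeter_degsum S.
have := perimeter_degsum H; rewrite degsum_fsetU // card_fsetU_disjoint //; lia.
Qed.

Lemma perimeter_fsetD1 P t : t \in P ->
  perimeter (P `\ t) + 3 = perimeter P + 2 * deg P t.
Proof.
move=> tP; have := @perimeter_fsetU (P `\ t) [fset t].
rewrite fdisjointX1 in_fsetD1 eqxx big_seq_fset1 deg_fsetD1_self fsetUC fsetD1K //.
have -> : perimeter [fset t] = 3.
  by rewrite /perimeter big_seq_fset1 (eq_in_count (a2 := predT)) ?count_predT ?size_nbrs //
    => s st; rewrite /= in_fset1; apply: contraTN st => /eqP->; apply: nbrs_irr.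
lia.
Qed.

Lemma perimeter_fill S H : [disjoint S & H] ->
  (forall t s, t \in H -> s \in nbrs t -> (s \in S) || (s \in H)) ->
  perimeter (S `|` H) + perimeter H = perimeter S.
Proof.
move=> SH closed; have := perimeter_fsetU SH.
suff -> : \sum_(t <- H) deg S t = perimeter H by lia.
apply: eq_big_seq => t tH; apply: eq_in_count => s st /=.
have := closed t s tH st.
by case: (boolP (s \in S)) => [/(fdisjointP SH)/negbTE-> | _ /= ->].
Qed.

Inductive reach (S : {fset tile}) (a : tile) : tile -> Prop :=
| reach0 : reach S a a
| reachS b c : reach S a b -> adj b c -> c \in S -> reach S a c.

Definition connected (S : {fset tile}) : Prop :=
  forall t s, t \in S -> s \in S -> reach S t s.

Lemma reach_in S a b : reach S a b -> a \in S -> b \in S.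
Proof. by elim=> // b' c _ _ _ ->. Qed.

Lemma reach_trans S a b c : reach S a b -> reach S b c -> reach S a c.
Proof. by move=> ab; elim=> // b' c' _ ac' b'c' c'S; apply: reachS ac' b'c' c'S. Qed.

Lemma reach_sym S a b : a \in S -> reach S a b -> reach S b a.
Proof.
move=> aS; elim=> [|b' c ab' IH b'c cS]; first exact: reach0.
apply: reach_trans IH; apply: reachS (reach0 _ _) (adj_sym b'c) _.
exact: reach_in ab' aS.
Qed.

Lemma reach_sub S S' a b : {subset S <= S'} -> reach S a b -> reach S' a b.
Proof.
by move=> SS'; elim=> [|b' c _ IH b'c /SS' cS']; [apply: reach0 | apply: reachS IH b'c cS'].
Qed.

Lemma edge_connectedE S : edge_connected S <-> connected S.
Proof.
have path_reach a p : path adj a p -> all (fun u => u \in S) p -> reach S a (last a p).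
  elim/last_ind: p => [|p c IH]; first by move=> _ _; apply: reach0.
  rewrite rcons_path all_rcons last_rcons => /andP[ap pc] /andP[cS pS].
  exact: reachS (IH ap pS) pc cS.
have reach_path a b : reach S a b ->
    exists p, [/\ path adj a p, last a p = b & all (fun u => u \in S) p].
  elim=> [|b' c _ [p [ap <- pS]] b'c cS]; first by exists [::].
  by exists (rcons p c); rewrite rcons_path last_rcons all_rcons ap b'c cS pS.
split=> conn t s tS sS; first by have [p [ap <- pS]] := conn t s tS sS; apply: path_reach.
exact/reach_path/conn.
Qed.

Lemma connected_hub S c : (forall a, a \in S -> reach S a c) -> connected S.
Proof.
by move=> hub a b aS bS; apply: reach_trans (hub a aS) (reach_sym bS (hub b bS)).
Qed.

Lemma connected_fset1 t : connected [fset t].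
Proof. by move=> a b; rewrite !in_fset1 => /eqP-> /eqP->; apply: reach0. Qed.

Lemma connected_fsetU F H t s : connected F -> connected H ->
  t \in H -> s \in F -> adj t s -> connected (F `|` H).
Proof.
move=> cF cH tH sF ts; apply: (@connected_hub _ s) => a; rewrite in_fsetU => /orP[aF|aH].
  by apply: reach_sub (cF a s aF sF) => x xF; rewrite in_fsetU xF.
apply: reachS ts _; last by rewrite in_fsetU sF.
by apply: reach_sub (cH a t aH tH) => x xH; rewrite in_fsetU xH orbT.
Qed.

Lemma reach_exit S B a y : reach S a y -> a \in B -> y \notin B ->
  exists b b', [/\ reach B a b, adj b b', b' \in S & b' \notin B].
Proof.
move=> ay aB; have [/reach_in/(_ aB)->//|//] : reach B a y \/
    exists b b', [/\ reach B a b, adj b b', b' \in S & b' \notin B].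
elim: ay => [|b c _ [ab|] bc cS]; [by left; apply: reach0 | | by right].
by case: (boolP (c \in B)) => cB; [left; apply: reachS ab bc cB | right; exists b, c].
Qed.

Lemma reach_has_nbr S a b : reach S a b -> a \in S -> a != b ->
  exists2 c, c \in nbrs b & c \in S.
Proof.
case=> [|c b' ac cb' _] aS; first by rewrite eqxx.
by exists c; [rewrite nbrs_sym | apply: reach_in ac aS].
Qed.

Definition component (S : {fset tile}) (a : tile) : {fset tile} :=
  [fset y in S | `[< reach S a y >]].

Lemma componentP S a y : a \in S -> reflect (reach S a y) (y \in component S a).
Proof.
move=> aS; rewrite !inE; apply: (iffP andP) => [[_ /asboolP]//|ay].
by split; [apply: reach_in ay aS | apply/asboolP].
Qed.

Lemma component_sub S a : {subset component S a <= S}.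
Proof. by move=> y; rewrite !inE => /andP[]. Qed.

Lemma component_closed S a y y' : y \in component S a -> y' \in nbrs y -> y' \in S ->
  y' \in component S a.
Proof.
rewrite !inE => /andP[_ /asboolP ay] yy' y'S; rewrite y'S /=.
exact/asboolP/(reachS ay yy' y'S).
Qed.

Lemma component_connected S a : a \in S -> connected (component S a).
Proof.
move=> aS; have aC : a \in component S a by apply/componentP/reach0.
apply: (@connected_hub _ a) => y /(componentP _ aS) ay; apply: (reach_sym aC).
elim: ay => [|b c ab IH bc cS]; first exact: reach0.
by apply: (reachS IH bc); apply/(componentP _ aS)/(reachS ab bc cS).
Qed.

Lemma connected_fsetD1_leaf P l : connected P -> l \in P -> deg P l = 1 ->
  connected (P `\ l).
Proof.
move=> cP lP dl; have [c lc cP'] : exists2 c, c \in nbrs l & c \in P.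
  by apply/hasP; rewrite has_count; move: dl; rewrite /deg => ->.
apply: (@connected_hub _ c) => a; rewrite in_fsetD1 => /andP[al aP].
have aB : a \in P `\ l by rewrite in_fsetD1 al.
have [b [b' [ab bb' b'P]]] := reach_exit (cP a l aP lP) aB (negbT (fsetD11 l P)).
rewrite in_fsetD1 b'P andbT negbK => /eqP b'l.
have /[!in_fsetD1]/andP[_ bP] := reach_in ab aB.
rewrite b'l /adj nbrs_sym in bb'.
by rewrite -(deg1_nbr_uniq dl bb' lc bP cP').
Qed.

Lemma seq_argmax (A : eqType) (d : Order.disp_t) (T : orderType d) (f : A -> T) s :
  s != [::] -> exists2 x, x \in s & {in s, forall y, (f y <= f x)%O}.
Proof.
elim: s => [//|a s IH] _; have [->|/IH[m ms mmax]] := eqVneq s [::].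
  by exists a; [apply: mem_head | move=> y; rewrite mem_seq1 => /eqP->].
have [ma|am] := leP (f m) (f a).
  exists a; first exact: mem_head.
  by move=> y /[!inE]/orP[/eqP->//|/mmax/le_trans]; apply.
exists m; first by rewrite inE ms orbT.
by move=> y /[!inE]/orP[/eqP->|/mmax//]; apply: ltW.
Qed.

Lemma fset_argmax (A : choiceType) (d : Order.disp_t) (T : orderType d) (f : A -> T)
    (S : {fset A}) :
  S != fset0 -> exists2 x, x \in S & {in S, forall y, (f y <= f x)%O}.
Proof.
move=> /fset0Pn[x xS]; apply: seq_argmax.
by move: xS; rewrite -[x \in S]/(x \in enum_fset S); case: (enum_fset S).
Qed.

(* Three times the second lattice coordinate of the centroid of a tile. *)
Definition height (t : tile) : int := (3 * t.1.2 + (if t.2 then 1 else 2))%R.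

Lemma top_pair P : P != fset0 -> {in P, forall t, 1 < deg P t} ->
  exists x y : int, [/\ (x, y, false) \in P, (x + 1, y, true)%R \in P,
    deg P (x, y, false) = 2, deg P (x + 1, y, true)%R = 2 & (x + 1, y - 1, false)%R \in P].
Proof.
move=> Pn d2.
have [[[x y] o] tP tmax] := fset_argmax (fun t : tile => (height t, t.1.1) : int *l int) Pn.
have above s : (height (x, y, o) < height s)%R ||
    ((height s == height (x, y, o)) && (x < s.1.1))%R -> (s \in P) = false.
  by move=> lt; apply/negP => /tmax; move: lt; rewrite lexi_pair /height /=; lia.
case: o tP tmax above => tP tmax above.
  have := d2 _ tP; rewrite /deg /= (above (x, y, false)) ?(above (x - 1, y, false))%R //;
    rewrite /height /=; lia.
have := d2 _ tP; rewrite /deg /= (above (x, y + 1, true))%R; last first.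
  by rewrite /height /=; lia.
case sP: ((x, y, true) \in P); case uP: ((x + 1, y, true)%R \in P) => // _.
have := d2 _ uP; rewrite /deg /= addrK tP (above (x + 1, y, false))%R; last first.
  by rewrite /height /=; lia.
case wP: ((x + 1, y - 1, false)%R \in P) => // _.
exists x, y; rewrite /deg /= addrK sP uP tP wP.
by rewrite (above (x, y + 1, true))%R ?(above (x + 1, y, false))%R //; rewrite /height /=; lia.
Qed.

Lemma bottom_pair P : P != fset0 -> {in P, forall t, 1 < deg P t} ->
  exists x y : int, [/\ (x, y, true) \in P, (x, y, false) \in P,
    deg P (x, y, true) = 2, deg P (x, y, false) = 2 &
    {in P, forall s, 3 * y + 1 <= height s}%R].
Proof.
move=> Pn d2.
have [[[x y] o] tP tmin] :=
  fset_argmax (fun t : tile => (- height t, t.1.1)%R : int *l int) Pn.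
have below s : (height s < height (x, y, o))%R ||
    ((height s == height (x, y, o)) && (x < s.1.1))%R -> (s \in P) = false.
  by move=> lt; apply/negP => /tmin; move: lt; rewrite lexi_pair /height /=; lia.
case: o tP tmin below => tP tmin below; last first.
  have := d2 _ tP; rewrite /deg /= (below (x, y, true)) ?(below (x + 1, y, true))%R //;
    rewrite /height /=; lia.
have := d2 _ tP; rewrite /deg /= (below (x, y - 1, false))%R; last first.
  by rewrite /height /=; lia.
case vP: ((x, y, false) \in P); case wP: ((x - 1, y, false)%R \in P) => // _.
have := d2 _ vP; rewrite /deg /= tP (below (x + 1, y, true))%R; last first.
  by rewrite /height /=; lia.
case zP: ((x, y + 1, true)%R \in P) => // _.
exists x, y; split=> //.
- by rewrite /deg /= (below (x, y - 1, false))%R ?vP ?wP //; rewrite /height /=; lia.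
- by rewrite /deg /= (below (x + 1, y, true))%R ?tP ?zP //; rewrite /height /=; lia.
- by move=> s /tmin; rewrite lexi_pair /height /=; lia.
Qed.

Lemma deg2_pair_avoiding P r : P != fset0 -> {in P, forall t, 1 < deg P t} ->
  exists t u, [/\ t \in P, u \in P, t != r & u != r] /\
              [/\ adj t u, deg P t = 2 & deg P u = 2].
Proof.
move=> Pn d2; have [x [y [tP uP dt du wP]]] := top_pair Pn d2.
have [x' [y' [bP vP db dv low]]] := bottom_pair Pn d2.
have y'y : (y' < y)%R by have := low _ wP; rewrite /height /=; lia.
have [ry|ry] := eqVneq r.1.2 y.
  exists (x', y', true), (x', y', false); split; last by rewrite /adj /= !inE eqxx.
  by split=> //; apply/eqP => e; move: ry; rewrite -e /=; lia.
exists (x, y, false), (x + 1, y, true)%R; split; last by rewrite /adj /= !inE eqxx orbT.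
by split=> //; apply: contraNneq ry => <-.
Qed.

Lemma fsetD1_nonempty (K : choiceType) (P : {fset K}) t :
  1 < #|` P| -> exists s, s \in P `\ t.
Proof.
move=> P2; apply/fset0Pn; rewrite -cardfs_gt0.
by move: P2; rewrite (cardfsD1 t P); case: (t \in P); lia.
Qed.

Lemma deg_gt1_noncut P : connected P -> 2 < #|` P| ->
  (forall c, c \in P -> connected (P `\ c)) -> {in P, forall x, 1 < deg P x}.
Proof.
move=> cP P3 nocut x xP.
have [z1 /[!in_fsetD1]/andP[z1x z1P]] := @fsetD1_nonempty _ P x (ltnW P3).
have [c xc cP'] := reach_has_nbr (cP z1 x z1P xP) z1P z1x.
have [z] : exists z, z \in P `\ c `\ x.
  apply: fsetD1_nonempty; move: P3; rewrite (cardfsD1 c P) cP'.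
  by rewrite (cardfsD1 x (P `\ c)) in_fsetD1 xP andbT; case: (x == c); lia.
rewrite in_fsetD1 => /andP[zx zP'].
have xPc : x \in P `\ c.
  by rewrite in_fsetD1 xP andbT; apply: contraTneq xc => ->; apply: nbrs_irr.
have [y xy /[!in_fsetD1]/andP[yc yP]] := reach_has_nbr (nocut c cP' z x zP' xPc) zP' zx.
exact: deg_ge2 xy xc yP cP' yc.
Qed.

(* Peeling a leaf lowers the perimeter by one; peeling [t] and then [u], which has
   become a leaf, leaves it unchanged.  The tile [r] to be spared is where a block
   is attached to the rest of a polyiamond in the induction below. *)
Definition peelable (P : {fset tile}) (r : tile) : Prop :=
  (exists l, [/\ l \in P, l != r & deg P l = 1]) \/
  (exists t u, [/\ t \in P, u \in P, t != r & u != r] /\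
               [/\ adj t u, deg P t = 2, deg P u = 2 & connected (P `\ t)]).

Lemma peelable_noncut P r : connected P -> 1 < #|` P| ->
  (forall c, c \in P -> connected (P `\ c)) -> peelable P r.
Proof.
move=> cP P2 nocut; have [P3|P2'] := ltnP 2 #|` P|.
  have Pn : P != fset0 by rewrite -cardfs_gt0; lia.
  have [t [u [tuP [tu dt du]]]] := deg2_pair_avoiding r Pn (deg_gt1_noncut cP P3 nocut).
  by right; exists t, u; split=> //; split=> //; apply: nocut; case: tuP.
have [l /[!in_fsetD1]/andP[lr lP]] := @fsetD1_nonempty _ P r P2.
have [z /[!in_fsetD1]/andP[zl zP]] := @fsetD1_nonempty _ P l P2.
left; exists l; split=> //; apply/eqP; rewrite eqn_leq; apply/andP; split.
  have := deg_le_card (P `\ l) l; rewrite deg_fsetD1_self.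
  by move: P2'; rewrite (cardfsD1 l P) lP; lia.
have [y ly yP] := reach_has_nbr (cP z l zP lP) zP zl.
by rewrite /deg -has_count; apply/hasP; exists y.
Qed.

Section Block.

Variables (P C : {fset tile}) (c : tile).
Hypotheses (cP : connected P) (cPin : c \in P) (cC : c \notin C) (CP : {subset C <= P}).
Hypothesis C_closed : forall y y', y \in C -> y' \in nbrs y -> y' \in P -> y' \in c |` C.

Lemma deg_block y : y \in C -> deg P y = deg (c |` C) y.
Proof.
move=> yC; apply: eq_in_count => y' yy' /=; apply/idP/idP; first exact: C_closed yC yy'.
by rewrite in_fset1U => /orP[/eqP->|/CP].
Qed.

Lemma connected_fsetD1_block t : t \in C -> connected ((c |` C) `\ t) -> connected (P `\ t).
Proof.
move=> tC cQt; have tc : t != c by apply: contraNneq cC => <-.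
have cPt : c \in P `\ t by rewrite in_fsetD1 eq_sym tc.
have QtPt : {subset (c |` C) `\ t <= P `\ t}.
  by move=> y; rewrite !in_fsetD1 in_fset1U => /andP[-> /orP[/eqP->|/CP]].
apply: (@connected_hub _ c) => a aPt; have [aQ|aQ] := boolP (a \in c |` C).
  apply: reach_sub QtPt _; apply: cQt; last by rewrite in_fsetD1 fset1U1 eq_sym tc.
  by move: aPt; rewrite !in_fsetD1 aQ => /andP[->].
have aP : a \in P by move: aPt; rewrite in_fsetD1 => /andP[].
have aD : a \in P `\` (c |` C) by rewrite in_fsetD aQ.
have cD : c \notin P `\` (c |` C) by rewrite in_fsetD fset1U1.
have [b [b' [ab bb' b'P]]] := reach_exit (cP aP cPin) aD cD.
rewrite in_fsetD b'P andbT negbK in_fset1U => /orP[/eqP b'c|b'C].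
  apply: reachS (reach_sub _ ab) _ cPt; last by rewrite -b'c.
  by move=> y; rewrite in_fsetD in_fsetD1 in_fset1U negb_or => /andP[/andP[yc yC] ->];
    rewrite andbT; apply: contraNneq yC => ->.
have /[!in_fsetD]/andP[bQ bP] := reach_in ab aD.
by move: bQ; rewrite (C_closed b'C _ bP) // nbrs_sym.
Qed.

Lemma peelable_block r : r \notin C -> peelable (c |` C) c -> peelable P r.
Proof.
have inC y : y \in c |` C -> y != c -> y \in C.
  by rewrite in_fset1U => /orP[/eqP->|]; rewrite ?eqxx.
have neq_r y : y \in C -> r \notin C -> y != r by move=> yC; apply: contraNneq => <-.
move=> rC [[l [lQ lc dl]]|[t [u [[tQ uQ tc uc] [tu dt du ct]]]]].
  have lC := inC l lQ lc; left; exists l.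
  by rewrite CP // neq_r // deg_block.
have tC := inC t tQ tc; have uC := inC u uQ uc; right; exists t, u.
rewrite !CP // !neq_r // !deg_block //; split=> //; split=> //.
exact: connected_fsetD1_block.
Qed.

End Block.

Lemma peelable_cut P c r : connected P -> c \in P -> ~ connected (P `\ c) ->
  (forall Q, #|` Q| < #|` P| -> connected Q -> 1 < #|` Q| -> peelable Q c) ->
  peelable P r.
Proof.
move=> cP cPin ncut IH.
have [s [z [sPc zPc sz rs]]] : exists s z, [/\ s \in P `\ c, z \in P `\ c,
    ~ reach (P `\ c) s z & r \notin component (P `\ c) s].
  have [s1 [s2 [s1P s2P n12]]] : exists s1 s2,
      [/\ s1 \in P `\ c, s2 \in P `\ c & ~ reach (P `\ c) s1 s2].
    apply: contrapT => none; apply: ncut => a b aP bP; apply: contrapT => nab.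
    by apply: none; exists a, b.
  have [/(componentP _ s1P) r1|] := boolP (r \in component (P `\ c) s1); last first.
    by exists s1, s2.
  exists s2, s1; split=> //; first by move/(reach_sym s2P).
  apply/negP => /(componentP _ s2P) r2; apply: n12.
  exact: reach_trans r1 (reach_sym s2P r2).
set C := component (P `\ c) s.
have CPc : {subset C <= P `\ c} := @component_sub _ s.
have CP y : y \in C -> y \in P by move/CPc; rewrite in_fsetD1 => /andP[].
have cC : c \notin C by apply/negP => /CPc; rewrite fsetD11.
have C_closed y y' : y \in C -> y' \in nbrs y -> y' \in P -> y' \in c |` C.
  move=> yC yy' y'P; rewrite in_fset1U; have [//|y'c /=] := eqVneq y' c.
  by apply: component_closed yC yy' _; rewrite in_fsetD1 y'c.
have sC : s \in C by apply/(componentP _ sPc)/reach0.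
apply: (peelable_block cP cPin cC CP C_closed rs); apply: IH.
- have /[!in_fsetD1]/andP[zc zP] := zPc.
  have zQ : z \notin c |` C by rewrite in_fset1U negb_or zc; apply/(componentP _ sPc).
  have /fsubset_leq_card : c |` C `<=` P `\ z.
    apply/fsubsetP => y yQ; rewrite in_fsetD1; apply/andP; split.
      by apply: contraNneq zQ => <-.
    by move: yQ; rewrite in_fset1U => /orP[/eqP->|/CP].
  by rewrite (cardfsD1 z P) zP; lia.
- have [b [b' [sb bb' b'P b'C]]] := reach_exit (cP s c (CP s sC) cPin) sC cC.
  have bC := reach_in sb sC.
  have b'c : b' = c.
    by move: (C_closed b b' bC bb' b'P); rewrite in_fset1U (negbTE b'C) orbF => /eqP.
  apply: (connected_fsetU (@connected_fset1 c) (component_connected sPc) bC (fset11 c)).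
  by move: bb'; rewrite b'c.
- by rewrite cardfsU1 cC add1n ltnS cardfs_gt0; apply/fset0Pn; exists s.
Qed.

Lemma peelableP P r : connected P -> 1 < #|` P| -> peelable P r.
Proof.
move: {2}#|` P| (leqnn #|` P|) => N; elim: N P r => [|N IH] P r PN cP P2; first lia.
have [[c [cPin ncut]]|nocut] := pselect (exists c, c \in P /\ ~ connected (P `\ c)).
  by apply: (peelable_cut r cP cPin ncut) => Q QP; apply: IH; lia.
apply: peelable_noncut => // c cPin; apply: contrapT => ncut.
by apply: nocut; exists c.
Qed.

Lemma peel P : connected P -> 1 < #|` P| ->
  (exists2 Q, connected Q & #|` Q| = #|` P| - 1 /\ perimeter Q + 1 = perimeter P) \/
  (exists Q Q', [/\ connected Q, #|` Q| = #|` P| - 1 & perimeter Q = perimeter P + 1] /\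
                [/\ connected Q', #|` Q'| = #|` P| - 2, perimeter Q' = perimeter P &
                     2 < #|` P|]).
Proof.
move=> cP P2; have [[l [lP _ dl]]|[t [u [[tP uP _ _] [tu dt du ct]]]]] :=
  peelableP (0, 0, true)%R cP P2.
  left; exists (P `\ l); first exact: connected_fsetD1_leaf.
  by have := perimeter_fsetD1 lP; rewrite (cardfsD1 l P) lP dl; lia.
have ut : u != t by apply: contraTneq tu => ->; apply: nbrs_irr.
have uPt : u \in P `\ t by rewrite in_fsetD1 ut.
have dut : deg (P `\ t) u = 1.
  by move: du; rewrite (deg_fsetD1 u tP) -nbrs_sym (tu : u \in nbrs t); lia.
have Pt := cardfsD1 t P; rewrite tP in Pt.
right; exists (P `\ t), (P `\ t `\ u); split; split.
- exact: ct.
- lia.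
- by have := perimeter_fsetD1 tP; rewrite dt; lia.
- exact: connected_fsetD1_leaf.
- by rewrite (cardfsD1 u (P `\ t)) uPt in Pt; lia.
- by have := perimeter_fsetD1 tP; have := perimeter_fsetD1 uPt; rewrite dt dut; lia.
- by have := deg_le_card (P `\ t) t; rewrite deg_fsetD1_self dt; lia.
Qed.

Lemma shrink k P : connected P -> k < #|` P| ->
  exists2 Q, connected Q & #|` Q| = #|` P| - k /\ perimeter Q <= perimeter P + 1.
Proof.
move: {2}k (leqnn k) => K; elim: K k P => [|K IH] k P kK cP kP.
  by exists P => //; split; lia.
have [k0|k1] := posnP k; first by exists P => //; split; lia.
have [[Q cQ [QP pQ]]|[Q [Q' [[cQ QP pQ] [cQ' Q'P pQ' _]]]]] :=
  peel cP (leq_ltn_trans k1 kP).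
  have [R cR [RQ pR]] := IH k.-1 Q ltac:(lia) cQ ltac:(lia).
  by exists R => //; split; lia.
have [->|k2] := eqVneq k 1; first by exists Q => //; split; lia.
have [R cR [RQ pR]] := IH k.-2 Q' ltac:(lia) cQ' ltac:(lia).
by exists R => //; split; lia.
Qed.

Lemma perimeter_ge3 P : connected P -> P != fset0 -> 3 <= perimeter P.
Proof.
move: {2}#|` P| (leqnn #|` P|) => N; elim: N P => [|N IH] P PN cP;
  rewrite -cardfs_gt0 => P1; first lia.
have [P2|P1'] := ltnP 1 #|` P|.
  have [[Q cQ [QP pQ]]|[_ [Q' [_ [cQ' Q'P pQ' P3]]]]] := peel cP P2.
    by have := IH Q _ cQ; rewrite -cardfs_gt0; lia.
  by have := IH Q' _ cQ'; rewrite -cardfs_gt0; lia.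
have [t tP] : exists t, t \in P by apply/fset0Pn; rewrite -cardfs_gt0.
have := deg_le_card (P `\ t) t; have := perimeter_fsetD1 tP.
by rewrite deg_fsetD1_self (cardfsD1 t P) tP in P1' *; lia.
Qed.

Lemma hole_sub A H1 H2 x : is_hole A H1 -> is_hole A H2 -> x \in H1 -> x \in H2 ->
  {subset H1 <= H2}.
Proof.
move=> [_ H1A /edge_connectedE cH1 _] [_ _ _ H2_closed] xH1 xH2 y yH1.
elim: (cH1 x y xH1 yH1) => // b d _ bH2 bd dH1.
exact: H2_closed bH2 bd (H1A d dH1).
Qed.

Lemma hole_eq A H1 H2 x : is_hole A H1 -> is_hole A H2 -> x \in H1 -> x \in H2 -> H1 = H2.
Proof.
move=> h1 h2 x1 x2; apply/fsetP => y; apply/idP/idP.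
  exact: hole_sub h1 h2 x1 x2 y.
exact: hole_sub h2 h1 x2 x1 y.
Qed.

Lemma hole_touches A H : is_hole A H -> exists t s, [/\ t \in H, adj t s & s \in A].
Proof.
move=> [Hn _ _ H_closed]; have [[[x y] o] tH tmax] := fset_argmax height Hn.
pose s : tile := if o then (x, y, false) else (x, y + 1, true)%R.
have ts : adj (x, y, o) s by case: o {tH tmax} @s; rewrite /adj /= !inE eqxx ?orbT.
exists (x, y, o), s; split=> //; apply: contraT => /(H_closed _ _ tH ts)/tmax.
by case: o {tH tmax ts} @s; rewrite /height /=; lia.
Qed.

Lemma fill_holes A L : connected A -> uniq L -> {in L, forall H, is_hole A H} ->
  exists2 F, connected F &
    [/\ #|` A| + size L <= #|` F|, perimeter F + 3 * size L <= perimeter A,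
        {subset A <= F} & forall x, x \in F -> x \in A \/ exists2 H, H \in L & x \in H].
Proof.
move=> cA; elim: L => [|H L IH].
  by move=> _ _; exists A => //; rewrite /= addn0 muln0 addn0; split=> // x; left.
move=> /andP[HL uL] holes; have hH : is_hole A H by apply: holes; rewrite mem_head.
have holesL : {in L, forall H, is_hole A H}.
  by move=> H' H'L; apply: holes; rewrite inE H'L orbT.
have [F cF [FA pF AF Fcover]] := IH uL holesL.
have [Hn HA /edge_connectedE cH H_closed] := hH.
have FH : [disjoint F & H].
  apply/fdisjointP => x /Fcover[xA|[H' H'L xH']]; apply/negP => xH.
    by move: (HA x xH); rewrite xA.
  by move: HL; rewrite (hole_eq hH (holesL H' H'L) xH xH') H'L.
have pFH : perimeter (F `|` H) + perimeter H = perimeter F.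
  apply: (perimeter_fill FH) => t s tH ts; have [sA|sA] := boolP (s \in A).
    by rewrite AF.
  by rewrite (H_closed t s tH ts sA) orbT.
have [t [s [tH ts sA]]] := hole_touches hH.
exists (F `|` H); first exact: connected_fsetU cF cH tH (AF s sA) ts.
split.
- by move: FA Hn; rewrite card_fsetU_disjoint // -cardfs_gt0 /=; lia.
- by move: pF; have := perimeter_ge3 cH Hn; rewrite /=; lia.
- by move=> x xA; rewrite in_fsetU AF.
- move=> x; rewrite in_fsetU => /orP[/Fcover[xA|[H' H'L xH']]|xH]; [by left | right..].
    by exists H'; rewrite // inE H'L orbT.
  by exists H; rewrite ?mem_head.
Qed.

Lemma holes_bound n h bm pm :
  (exists A : {fset tile}, [/\ polyiamond A, #|` A| = n & has_holes A h]) ->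
  is_bmin n bm -> is_pmin (n + h) pm -> 3 * h + 2 * bm + pm <= 3 * n.
Proof.
move=> [A [Apoly nA [Hs [HsP hHs]]]] [_ bmin] [_ pmin].
have cA : connected A by apply/edge_connectedE; case: Apoly.
have holes : {in enum_fset Hs, forall H, is_hole A H} by move=> H /HsP.
have [F cF [FA pF _ _]] := fill_holes cA (fset_uniq Hs) holes.
rewrite -/(#|` Hs|) hHs nA in FA pF.
have n0 : 0 < n by rewrite -nA cardfs_gt0; case: Apoly.
have [Q cQ [QF pQ]] := @shrink (#|` F| - (n + h)) F cF ltac:(lia).
have Qn : #|` Q| = n + h by lia.
have Qpoly : polyiamond Q by split; [rewrite -cardfs_gt0 Qn; lia | apply/edge_connectedE].
have := pmin Q Qpoly Qn; have := bmin A Apoly nA.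
(* The unit of perimeter lost in [shrink] is recovered by parity. *)
have := perimeter_bonds A; have := perimeter_bonds Q; rewrite nA Qn; lia.
Qed.

Local Open Scope ring_scope.

Theorem lemma2 (n h : nat) :
  (exists A : {fset tile}, [/\ polyiamond A, #|` A|%fset = n & has_holes A h]) ->
  forall bm pm : nat, is_bmin n bm -> is_pmin (n + h) pm ->
  (h%:R : rat) <= ((3 * n)%:R - (2 * bm)%:R - pm%:R) / 3.
Proof.
move=> holey bm pm bmin pmin; have := holes_bound holey bmin pmin.
rewrite ler_pdivlMr ?ltr0n // !lerBrDr -[h%:R * 3]natrM -!natrD ler_nat.
lia.
Qed.
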